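(* For every integer $r\ge 4$ there exists an infinite family of connected $r$-regular graphs $G$, each containing a pair of closed twins, such that $\gamma^{LD}(G)>\frac{n(G)}{2}$.
   Context: All graphs are finite and simple; $n(G)$ is the number of vertices. A graph is $r$-regular if every vertex has degree $r$. Two distinct vertices $u,v$ are closed twins if $N[u]=N[v]$. For $S\subseteq V(G)$, $I(v)=N[v]\cap S$. A set $S$ is locating-dominating if every vertex $v$ has $I(v)\ne\emptyset$ and $I(u)\neq I(v)$ for all distinct $u,v\in V(G)\setminus S$. $\gamma^{LD}(G)$ denotes the minimum size of a locating-dominating set of $G$. *)

From mathcomp Require Import all_boot.
Set Implicit Arguments. Unset Strict Implicit. Unset Printing Implicit Defensive.

Section Graphs.
Variable T : finType.
Variable e : rel T.

Definition simple_graph : Prop := symmetric e /\ irreflexive e.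

Definition nbhd (v : T) : {set T} := [set u | e v u].
Definition cnbhd (v : T) : {set T} := [set u | (u == v) || e v u].

Definition regular (r : nat) : Prop := forall v : T, #|nbhd v| = r.

Definition connected_graph : Prop := forall u v : T, connect e u v.

Definition closed_twins (u v : T) : Prop := u != v /\ cnbhd u = cnbhd v.

Definition has_closed_twins : Prop := exists u v : T, closed_twins u v.

Definition Iset (S : {set T}) (v : T) : {set T} := cnbhd v :&: S.

Definition locating_dominating (S : {set T}) : bool :=
  [forall v, Iset S v != set0] &&
  [forall u, forall v,
     ((u \notin S) && (v \notin S) && (u != v)) ==> (Iset S u != Iset S v)].

(* minimum size of a locating-dominating set (V itself is one, so the
   default value #|T| of the minimum is harmless) *)
Definition gammaLD : nat :=
  \big[minn/#|T|]_(S : {set T} | locating_dominating S) #|S|.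
End Graphs.

From mathcomp Require Import all_boot zify.
Set Implicit Arguments. Unset Strict Implicit. Unset Printing Implicit Defensive.

(* For m = r - 1 take N + 1 copies of K_(m+2) minus an edge ab, arranged in a
   cycle, the b of each copy joined to the a of the next.  This graph is
   connected and r-regular, and two clique vertices of a copy are closed
   twins.  A locating-dominating set S misses at most one clique vertex per
   copy; if it misses one and also a and b of a copy, it must contain the b
   of the previous copy and the a of the next one.  Discharging: give copy g
   the weight 6|S ∩ copy g| + 2(b_(g-1) + a_(g+1)) - 2(a_g + b_g), counting
   only vertices of S; each weight exceeds 3(m+2) and the weights sum to
   6|S|, so 2|S| > n. *)

Section LocatingDomination.
Variables (T : finType) (e : rel T).

Lemma cnbhdE v : cnbhd e v = v |: nbhd e v.
Proof. by apply/setP => u; rewrite !inE. Qed.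

Lemma card_cnbhd v : irreflexive e -> #|cnbhd e v| = #|nbhd e v|.+1.
Proof. by move=> irr; rewrite cnbhdE cardsU1 inE irr. Qed.

Lemma connect_cnbhd u v : v \in cnbhd e u -> connect e u v.
Proof. by rewrite inE => /orP[/eqP->|/connect1]. Qed.

Lemma locating_dominatingP S :
  reflect ((forall v, Iset e S v != set0) /\
           (forall u v, u \notin S -> v \notin S -> u != v ->
              Iset e S u != Iset e S v))
          (locating_dominating e S).
Proof.
apply: (iffP andP) => [[/forallP dom /forallP loc] | [dom loc]]; split.
- exact: dom.
- move=> u v uS vS uv; have /forallP/(_ v)/implyP := loc u.
  by apply; rewrite uS vS uv.
- exact/forallP.
- apply/forallP => u; apply/forallP => v; apply/implyP.
  by case/andP => /andP[uS vS] uv; apply: loc.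
Qed.

Lemma locating_dominating_setT : locating_dominating e [set: T].
Proof.
apply/locating_dominatingP; split => [v|u v]; last by rewrite inE.
by apply/set0Pn; exists v; rewrite !inE eqxx.
Qed.

Lemma gammaLD_gt n :
  (forall S, locating_dominating e S -> n < 2 * #|S|) -> n < 2 * gammaLD e.
Proof.
move=> ltnS; rewrite /gammaLD; apply: (big_ind (fun s => n < 2 * s)) => //.
- by rewrite -cardsT; apply/ltnS/locating_dominating_setT.
- by move=> x y x_gt y_gt; rewrite /minn; case: ifP.
Qed.

End LocatingDomination.

Section Relabel.
Variables (T T' : finType) (e : rel T) (f : T' -> T) (g : T -> T').
Hypotheses (fK : cancel f g) (gK : cancel g f).

Definition relabel : rel T' := fun x y => e (f x) (f y).

Lemma relabel_simple : simple_graph e -> simple_graph relabel.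
Proof. by case=> sym irr; split => [x y|x]; [apply: sym | apply: irr]. Qed.

Lemma relabel_connected : connected_graph e -> connected_graph relabel.
Proof.
move=> conn x y; have /connectP[p p_path yE] := conn (f x) (f y).
apply/connectP; exists (map g p); last by rewrite -{1}(fK x) last_map -yE fK.
elim: p x {yE} p_path => //= z p IHp x /andP[xz p_path].
by rewrite {1}/relabel gK xz IHp ?gK.
Qed.

Lemma cnbhd_relabel x : cnbhd relabel x = f @^-1: cnbhd e (f x).
Proof. by apply/setP => y; rewrite !inE (can_eq fK). Qed.

Lemma relabel_regular r : regular e r -> regular relabel r.
Proof.
move=> reg x; rewrite -(reg (f x)) -(card_imset _ (can_inj gK)).
by apply: eq_card => y; rewrite (can2_imset_pre _ gK fK) !inE.
Qed.

Lemma relabel_closed_twins : has_closed_twins e -> has_closed_twins relabel.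
Proof.
case=> u [v [uv cnbhd_uv]]; exists (g u), (g v); split; first by rewrite (can_eq gK).
by rewrite !cnbhd_relabel !gK cnbhd_uv.
Qed.

Lemma Iset_relabel S' x : Iset relabel S' x = f @^-1: Iset e (f @: S') (f x).
Proof.
by apply/setP => y; rewrite !inE (can_eq fK) mem_imset //; apply: can_inj fK.
Qed.

Lemma relabel_locating_dominating S' :
  locating_dominating relabel S' -> locating_dominating e (f @: S').
Proof.
have memS u : (u \in f @: S') = (g u \in S').
  by rewrite -{1}(gK u) mem_imset //; apply: can_inj fK.
case/locating_dominatingP => dom loc; apply/locating_dominatingP; split.
- move=> u; apply: contra_neq (dom (g u)) => Iu0.
  by rewrite Iset_relabel gK Iu0 preimset0.
- move=> u v uS vS uv; rewrite memS in uS; rewrite memS in vS.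
  have := loc _ _ uS vS; rewrite (can_eq gK) !Iset_relabel !gK => /(_ uv).
  by apply: contra_neq => ->.
Qed.

End Relabel.

Lemma setU1D1I (U : finType) (A S : {set U}) x y :
  x \notin S -> y \notin S -> (x |: (A :\ y)) :&: S = A :&: S.
Proof.
move=> xS yS; apply/setP => z; rewrite !inE.
by case: eqVneq => [->|_]; case: eqVneq => [->|]; rewrite ?(negbTE xS) ?(negbTE yS) ?andbF.
Qed.

Lemma big_option_sum (U : finType) (F : option U -> nat) :
  \sum_(x : option U) F x = F None + \sum_(x : U) F (Some x).
Proof.
rewrite (bigD1 None) //=; congr (_ + _).
rewrite (reindex_omap Some (fun x => x)) => [|[x|]] //.
by apply: eq_bigl => x; rewrite eqxx.
Qed.

Section Necklace.
Variables k m : nat.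

(* (g, None) and (g, Some None) are the vertices a and b of copy g, and the
   (g, Some (Some i)) its clique vertices.  For k = 0 the cycle edge joins a
   and b of the single copy, which is then K_(m+2). *)
Definition piece := option (option 'I_m).
Definition vertex := ('I_k.+1 * piece)%type.

Definition necklace : rel vertex := fun u v =>
  match u.2, v.2 with
  | None, None | Some None, Some None => false
  | None, Some None => u.1 == ordS v.1
  | Some None, None => v.1 == ordS u.1
  | Some (Some i), Some (Some j) => (u.1 == v.1) && (i != j)
  | _, _ => u.1 == v.1
  end.

Lemma necklace_sym : symmetric necklace.
Proof.
by move=> [g [[i|]|]] [h [[j|]|]]; rewrite /necklace //= eq_sym // [j == i]eq_sym.
Qed.

Lemma necklace_irr : irreflexive necklace.
Proof. by move=> [g [[i|]|]]; rewrite /necklace /= ?eqxx. Qed.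

Definition block g : {set vertex} := [set w | w.1 == g].

Lemma card_block g : #|block g| = m.+2.
Proof.
have -> : block g = setX [set g] [set: piece] by apply/setP => -[h x]; rewrite !inE andbT.
by rewrite cardsX cards1 cardsT !card_option card_ord mul1n.
Qed.

Lemma cnbhd_clique g i : cnbhd necklace (g, Some (Some i)) = block g.
Proof.
apply/setP => -[h [[j|]|]]; rewrite !inE /necklace /= xpair_eqE ?andbF //= eq_sym.
by case: eqVneq => //= _; rewrite (inj_eq (@Some_inj _)) (inj_eq (@Some_inj _)); case: eqVneq.
Qed.

Lemma cnbhd_lo g :
  cnbhd necklace (g, None) = (ord_pred g, Some None) |: (block g :\ (g, Some None)).
Proof.
apply/setP => -[h [[j|]|]]; rewrite !inE /necklace /= !xpair_eqE ?andbF ?andbT ?orbF //=.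
by rewrite andNb orbF; apply/eqP/eqP => ->; rewrite ?ordSK ?ord_predK.
Qed.

Lemma cnbhd_hi g :
  cnbhd necklace (g, Some None) = (ordS g, None) |: (block g :\ (g, None)).
Proof.
apply/setP => -[h [[j|]|]]; rewrite !inE /necklace /= !xpair_eqE ?andbF ?andbT ?orbF.
all: by rewrite /= ?andNb ?orbF // eq_sym.
Qed.

Lemma card_cnbhd_necklace v : #|cnbhd necklace v| = m.+2.
Proof.
case: v => g [[i|]|]; rewrite ?cnbhd_clique ?cnbhd_lo ?cnbhd_hi ?card_block //.
- have := cardsD1 (g, None) (block g).
  by rewrite cardsU1 card_block !inE !xpair_eqE /= !eqxx andbT andNb => ->.
- have := cardsD1 (g, Some None) (block g).
  by rewrite cardsU1 card_block !inE !xpair_eqE /= !eqxx andbT andNb => ->.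
Qed.

Lemma necklace_regular : regular necklace m.+1.
Proof.
by move=> v; apply/succn_inj; rewrite -card_cnbhd ?card_cnbhd_necklace //; apply: necklace_irr.
Qed.

Lemma necklace_connected : 0 < m -> connected_graph necklace.
Proof.
move=> m_gt0; pose hub g : vertex := (g, Some (Some (Ordinal m_gt0))).
have csym := sym_connect_sym necklace_sym.
have hub_block v : connect necklace v (hub v.1).
  by rewrite csym; apply: connect_cnbhd; rewrite cnbhd_clique inE.
have hub_next g : connect necklace (hub g) (hub (ordS g)).
  by apply/connectP; exists [:: (g, Some None); (ordS g, None); hub (ordS g)];
    rewrite //= /necklace /= !eqxx.
have hub0 g : connect necklace (hub ord0) (hub g).
  case: g => j; elim: j => [|j IHj] lt_j.
    by apply: eq_connect0; congr hub; apply: val_inj.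
  apply: connect_trans (IHj (ltnW lt_j)) _.
  have -> : Ordinal lt_j = ordS (Ordinal (ltnW lt_j)) by apply: val_inj; rewrite /= modn_small.
  exact: hub_next.
move=> u v; apply: connect_trans (hub_block u) _.
apply: connect_trans (_ : connect _ (hub v.1) v); last by rewrite csym.
by apply: connect_trans (hub0 v.1); rewrite csym.
Qed.

Lemma necklace_closed_twins : 1 < m -> has_closed_twins necklace.
Proof.
move=> m_gt1; have m_gt0 := ltnW m_gt1.
exists (ord0, Some (Some (Ordinal m_gt0))), (ord0, Some (Some (Ordinal m_gt1))).
by split; rewrite ?cnbhd_clique // xpair_eqE !(inj_eq (@Some_inj _)).
Qed.

Lemma card_vertex : #|{: vertex}| = k.+1 * m.+2.
Proof. by rewrite card_prod card_ord !card_option card_ord. Qed.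

Section LowerBound.
Variable S : {set vertex}.
Hypothesis S_ld : locating_dominating necklace S.

Let lo g : nat := (g, None) \in S.
Let hi g : nat := (g, Some None) \in S.
Definition clique_in g := [set i : 'I_m | (g, Some (Some i)) \in S].

Lemma card_necklace_set : #|S| = \sum_g (lo g + hi g + #|clique_in g|).
Proof.
rewrite -sum1_card big_mkcond /=.
have -> : \sum_(u : vertex) (if u \in S then 1 else 0) =
          \sum_g \sum_(x : piece) (if (g, x) \in S then 1 else 0).
  by rewrite pair_big; apply: eq_big => // -[].
apply: eq_bigr => g _; rewrite !big_option_sum addnA.
congr (_ + _).
by rewrite -sum1_card [RHS]big_mkcond; apply: eq_bigr => i _; rewrite inE.
Qed.

Lemma clique_in_almost_full g : m <= #|clique_in g|.+1.
Proof.
have /locating_dominatingP[_ loc] := S_ld.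
rewrite -[m in m <= _]card_ord -(cardsC (clique_in g)) -addn1 leq_add2l.
apply/card_le1_eqP => i j; rewrite !inE => iS jS; case: (eqVneq i j) => // ij.
have neq : (g, Some (Some i)) != (g, Some (Some j)) :> vertex.
  by rewrite xpair_eqE eqxx !(inj_eq (@Some_inj _)).
by have := loc _ _ iS jS neq; rewrite /Iset !cnbhd_clique eqxx.
Qed.

(* Otherwise (g, None) or (g, Some None) would have the same trace on S as a
   clique vertex of block g missing from S. *)
Lemma poor_block g :
  #|clique_in g| < m -> (g, None) \notin S -> (g, Some None) \notin S ->
  ((ord_pred g, Some None) \in S) /\ ((ordS g, None) \in S).
Proof.
move=> not_full loS hiS; have /locating_dominatingP[_ loc] := S_ld.
have /subsetPn[i _] : ~~ ([set: 'I_m] \subset clique_in g).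
  by rewrite subTset; apply: contraTneq not_full => ->; rewrite cardsT card_ord ltnn.
rewrite inE => iS; split; apply/negPn/negP => nS.
- have neq : (g, None) != (g, Some (Some i)) :> vertex by rewrite xpair_eqE eqxx.
  by have := loc _ _ loS iS neq; rewrite /Iset cnbhd_lo cnbhd_clique setU1D1I ?eqxx.
- have neq : (g, Some None) != (g, Some (Some i)) :> vertex by rewrite xpair_eqE eqxx.
  by have := loc _ _ hiS iS neq; rewrite /Iset cnbhd_hi cnbhd_clique setU1D1I ?eqxx.
Qed.

Lemma block_weight g : 3 <= m ->
  3 * m.+2 + 2 * (lo g + hi g) + 1 <=
  6 * (lo g + hi g + #|clique_in g|) + 2 * (hi (ord_pred g) + lo (ordS g)).
Proof.
move=> m_ge3; have := clique_in_almost_full g.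
have bits h : lo h <= 1 /\ hi h <= 1 by rewrite !leq_b1.
have := bits g; have := bits (ord_pred g); have := bits (ordS g).
case: (ltnP #|clique_in g| m) => [not_full|]; last lia.
rewrite /lo /hi; case loS: ((g, None) \in S); case hiS: ((g, Some None) \in S) => /=; try lia.
by have [-> ->] := poor_block not_full (negbT loS) (negbT hiS); lia.
Qed.

Lemma necklace_ld_bound : 3 <= m -> #|{: vertex}| < 2 * #|S|.
Proof.
move=> m_ge3; have weights := leq_sum (index_enum _) (fun g (_ : true) => block_weight g m_ge3).
rewrite !big_split /= !sum_nat_const card_ord in weights.
have reindex (F h : 'I_k.+1 -> _) : injective h -> \sum_g F (h g) = \sum_g F g.
  by move=> h_inj; rewrite [RHS](reindex_inj h_inj).
rewrite (reindex hi _ (@ord_pred_inj _)) (reindex lo _ (@ordS_inj _)) in weights.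
rewrite card_vertex card_necklace_set !big_split /=.
set A := \sum_g lo g in weights *; set B := \sum_g hi g in weights *.
set C := \sum_g #|clique_in g| in weights *; nia.
Qed.

End LowerBound.
End Necklace.

Theorem proposition11 :
  forall r : nat, 4 <= r ->
  forall N : nat, exists (n : nat) (e : rel 'I_n),
    N <= n /\
    simple_graph e /\ connected_graph e /\ regular e r /\
    has_closed_twins e /\
    n < 2 * gammaLD e.
Proof.
move=> r r_ge4 N; have [m -> m_ge3] : exists2 m, r = m.+1 & 3 <= m by exists r.-1; lia.
have fK := @enum_valK (vertex N m); have gK := @enum_rankK (vertex N m).
exists #|{: vertex N m}|, (relabel (@necklace N m) enum_val).
split; first by rewrite card_vertex; nia.
split; first by apply: relabel_simple; split; [apply: necklace_sym | apply: necklace_irr].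
split; first by apply: (relabel_connected fK gK); apply: necklace_connected; lia.
split; first by apply: (relabel_regular fK gK); apply: necklace_regular.
split; first by apply: (relabel_closed_twins fK gK); apply: necklace_closed_twins; lia.
apply: gammaLD_gt => S /(relabel_locating_dominating fK gK) S_ld.
by rewrite -(card_imset _ (can_inj fK)); apply: necklace_ld_bound.
Qed.
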